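(* Consider agent $i$ with $N_i$ neighbors $j\in\mathcal N_i$, and functions $f_i:W\times W^{N_i}\to\mathbb{R}^2$ ($W\subseteq\mathbb{R}^2$) satisfying $\|f_i(x,\bar x)\|\le M$, $\|f_i(x,\bar x)-f_i(y,\bar x)\|\le L_i\|x-y\|$ and $\|f_i(x,\bar x)-f_i(x,\bar y)\|\le \bar L_i\|\bar x-\bar y\|$ for all $x,y\in W$, $\bar x,\bar y\in W^{N_i}$, with $L_i,\bar L_i>0$. Fix $x_{\mathrm{des}}\in\mathbb{R}^2$ and set $g_i(e,\bar x,u)=f_i(e+x_{\mathrm{des}},\bar x)+u$. Let $t_{k_z}\in\mathbb{R}$, $T_z>0$, and let $u_i:[t_{k_z},t_{k_z}+T_z]\to\mathbb{R}^2$ be piecewise continuous with $\|u_i(s)\|\le u_{\max}$. Let $\bar x_i(\cdot)$ be the actual trajectory of the neighbors' stacked positions and $\hat{\bar x}_i(\cdot)$ a predicted one, both in $W^{N_i}$, such that each neighbor's actual and predicted positions satisfy $\|x_j(s)-\hat x_j(s)\|\le 2\sqrt3R$ for all $s$ and $j\in\mathcal N_i$, where $R>0$ is the side length of the hexagonal cells. Let $e_i(\cdot)$ solve $\dot e_i=g_i(e_i,\bar x_i(s),u_i(s))$ and $\hat e_i(\cdot)$ solve $\dot{\hat e}_i=g_i(\hat e_i,\hat{\bar x}_i(s),u_i(s))$ on $[t_{k_z},t_{k_z}+T_z]$, with the same initial value $\hat e_i(t_{k_z})=e_i(t_{k_z})$ (and $e_i+x_{\mathrm{des}},\hat e_i+x_{\mathrm{des}}\in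 W$). Then for every $s\in[t_{k_z},t_{k_z}+T_z]$, $$\|e_i(s)-\hat e_i(s)\|\le \rho_i(s-t_{k_z}),$$ where $$\rho_i(y)=\min\Big\{\widetilde\rho_i\big[e^{L_iy}-1\big],\ 2\|e_i(t_{k_z})\|+2y(M+u_{\max})\Big\},\qquad \widetilde\rho_i=\frac{2\sqrt3 R\,\bar L_i N_i}{L_i}.$$
   Context: $\|\cdot\|$ denotes the Euclidean norm; $\bar x\in W^{N_i}\subseteq\mathbb{R}^{2N_i}$ is the stacked vector of the $N_i$ neighbors' positions and its norm is the Euclidean norm on $\mathbb{R}^{2N_i}$. *)

From Stdlib Require Import Reals Lra List.
From Coquelicot Require Import Coquelicot.
Open Scope R_scope.

Definition vec2 := (R * R)%type.
Definition vadd (x y : vec2) : vec2 := (fst x + fst y, snd x + snd y).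
Definition vsub (x y : vec2) : vec2 := (fst x - fst y, snd x - snd y).
Definition norm2 (x : vec2) : R := sqrt (fst x ^ 2 + snd x ^ 2).

(* Stacked neighbor positions: entries 0..N-1 of a function nat -> vec2.
   Euclidean norm on R^(2N) of the stacked vector. *)
Definition sumN (N : nat) (f : nat -> R) : R :=
  fold_right Rplus 0 (map f (seq 0 N)).
Definition stack_norm (N : nat) (xb : nat -> vec2) : R :=
  sqrt (sumN N (fun j => norm2 (xb j) ^ 2)).
Definition stack_sub (xb yb : nat -> vec2) : nat -> vec2 :=
  fun j => vsub (xb j) (yb j).
Definition inWN (W : vec2 -> Prop) (N : nat) (xb : nat -> vec2) : Prop :=
  forall j, (j < N)%nat -> W (xb j).

Definition piecewise_continuous (u : R -> vec2) (a b : R) : Prop :=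
  exists (n : nat) (p : nat -> R),
    p 0%nat = a /\ p n = b /\
    (forall k, (k < n)%nat -> p k < p (S k)) /\
    (forall k, (k < n)%nat ->
       (forall s, p k < s < p (S k) -> continuous u s) /\
       (exists l : vec2, filterlim u (at_right (p k)) (locally l)) /\
       (exists l : vec2, filterlim u (at_left (p (S k))) (locally l))).

(* e is a (Carathéodory / integral-form) solution of de/ds = G s (e s) on [a,b]:
   for every s in [a,b], e(s) - e(a) is the Riemann integral of G t (e t)
   over [a,s], componentwise. *)
Definition is_solution (G : R -> vec2 -> vec2) (e : R -> vec2) (a b : R) : Prop :=
  forall s, a <= s <= b ->
    is_RInt (fun t => fst (G t (e t))) a s (fst (e s) - fst (e a)) /\
    is_RInt (fun t => snd (G t (e t))) a s (snd (e s) - snd (e a)).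

From Stdlib Require Import Reals Rgeom Lra Lia List.
From Coquelicot Require Import Coquelicot.
Open Scope R_scope.

(* The two errors start together, and their derivatives differ by
   f(e + x_des, xb) - f(ehat + x_des, xbhat), which the Lipschitz hypotheses bound
   by L |e - ehat| + c, where c = 2 sqrt 3 R Lbar N because each of the N neighbour
   prediction errors is at most 2 sqrt 3 R and sqrt N <= N.  Integrating gives
   |e - ehat|(s) <= L * int_t^s |e - ehat| + c (s - t), and Gronwall's inequality
   turns this into (c / L) (exp (L (s - t)) - 1).  Independently, both derivatives
   have norm at most M + umax, so |e(s)| and |ehat(s)| are at most
   |e(t)| + (s - t)(M + umax), which gives the second term of the minimum. *)

Lemma norm2_ge0 x : 0 <= norm2 x.
Proof. apply sqrt_pos. Qed.

Lemma norm2_vsub_dist_euc x y :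
  norm2 (vsub x y) = dist_euc (fst x) (snd x) (fst y) (snd y).
Proof. unfold norm2, dist_euc; now rewrite !Rsqr_pow2. Qed.

Lemma norm2_vsub_triangle x y z :
  norm2 (vsub x z) <= norm2 (vsub x y) + norm2 (vsub y z).
Proof. rewrite !norm2_vsub_dist_euc; apply triangle. Qed.

Lemma norm2_vsubC x y : norm2 (vsub x y) = norm2 (vsub y x).
Proof. unfold norm2, vsub; simpl; f_equal; ring. Qed.

Lemma norm2_vsub0 x : norm2 (vsub x (0, 0)) = norm2 x.
Proof. unfold norm2, vsub; simpl; f_equal; ring. Qed.

Lemma vsub_vadd2r x y z : vsub (vadd x z) (vadd y z) = vsub x y.
Proof. unfold vsub, vadd; simpl; f_equal; ring. Qed.

Lemma norm2_vsub_le x y : norm2 (vsub x y) <= norm2 x + norm2 y.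
Proof.
  rewrite <- (norm2_vsub0 x), <- (norm2_vsub0 y), (norm2_vsubC y).
  apply norm2_vsub_triangle.
Qed.

Lemma norm2_vadd_le x y : norm2 (vadd x y) <= norm2 x + norm2 y.
Proof.
  replace (vadd x y) with (vsub x (vsub (0, 0) y))
    by (unfold vsub, vadd; simpl; f_equal; ring).
  rewrite <- (norm2_vsub0 y), (norm2_vsubC y).
  apply norm2_vsub_le.
Qed.

Lemma norm2_vsub_lipschitz a b c d :
  Rabs (norm2 (vsub a b) - norm2 (vsub c d)) <= norm2 (vsub a c) + norm2 (vsub b d).
Proof.
  pose proof (norm2_vsub_triangle a c b). pose proof (norm2_vsub_triangle c d b).
  pose proof (norm2_vsub_triangle c a d). pose proof (norm2_vsub_triangle a b d).
  rewrite (norm2_vsubC d b) in *. rewrite (norm2_vsubC c a) in *.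
  apply Rabs_le; lra.
Qed.

Lemma vdot_le_norm2 x y : fst x * fst y + snd x * snd y <= norm2 x * norm2 y.
Proof. unfold norm2; rewrite <- !Rsqr_pow2; apply sqrt_cauchy. Qed.

Lemma norm2_is_RInt_le (g : R -> vec2) (beta : R -> R) (a b Ib : R) (V : vec2) :
  a <= b ->
  is_RInt (fun x => fst (g x)) a b (fst V) ->
  is_RInt (fun x => snd (g x)) a b (snd V) ->
  is_RInt beta a b Ib ->
  (forall x, a < x < b -> norm2 (g x) <= beta x) ->
  norm2 V <= Ib.
Proof.
  intros Hab Hg1 Hg2 Hbeta Hgb.
  set (n := norm2 V).
  assert (Hn : 0 <= n) by apply norm2_ge0.
  assert (Hnn : n * n = fst V * fst V + snd V * snd V).
  { unfold n, norm2. rewrite sqrt_sqrt; nra. }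
  assert (HIb : 0 <= Ib).
  { apply (is_RInt_ge_0 beta a b Ib Hab Hbeta).
    intros x Hx. pose proof (Hgb x Hx). pose proof (norm2_ge0 (g x)). lra. }
  (* |V|^2 = integral of <V, g> <= |V| * integral of beta *)
  assert (Hsq : n * n <= n * Ib).
  { rewrite Hnn.
    apply (is_RInt_le (fun x => fst V * fst (g x) + snd V * snd (g x))
             (fun x => n * beta x) a b _ _ Hab).
    - apply (is_RInt_plus (fun x => fst V * fst (g x)) (fun x => snd V * snd (g x)));
        [exact (is_RInt_scal _ _ _ _ _ Hg1) | exact (is_RInt_scal _ _ _ _ _ Hg2)].
    - exact (is_RInt_scal _ _ _ n _ Hbeta).
    - intros x Hx. pose proof (vdot_le_norm2 V (g x)).
      pose proof (Rmult_le_compat_l n _ _ Hn (Hgb x Hx)). fold n in H. lra. }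
  nra.
Qed.

Definition clamp (a b x : R) : R := Rmax a (Rmin b x).

Lemma clamp_in a b x : a <= b -> a <= clamp a b x <= b.
Proof. intros; unfold clamp, Rmax, Rmin; repeat destruct Rle_dec; lra. Qed.

Lemma clamp_id a b x : a <= x <= b -> clamp a b x = x.
Proof. intros; unfold clamp, Rmax, Rmin; repeat destruct Rle_dec; lra. Qed.

Lemma clamp_lipschitz a b x y : a <= b -> Rabs (clamp a b x - clamp a b y) <= Rabs (x - y).
Proof.
  intros; unfold clamp, Rmax, Rmin; repeat destruct Rle_dec;
    unfold Rabs; repeat destruct Rcase_abs; lra.
Qed.

Lemma continuous_of_lipschitz (g : R -> R) K :
  (forall x y, Rabs (g x - g y) <= K * Rabs (x - y)) -> forall x, continuous g x.
Proof.
  intros Hg x. apply continuity_pt_filterlim.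
  intros eps Heps. pose proof (Rabs_pos K). pose proof (Rle_abs K).
  exists (eps / (Rabs K + 1)). split.
  - apply Rdiv_lt_0_compat; lra.
  - intros y [_ Hy]. simpl in *. unfold R_dist in *.
    pose proof (Hg y x). pose proof (Rabs_pos (y - x)).
    apply (Rmult_lt_compat_r (Rabs K + 1)) in Hy; [|lra].
    unfold Rdiv in Hy. rewrite Rmult_assoc, Rinv_l in Hy by lra. nra.
Qed.

Lemma continuous_clamp_of_lipschitz_on (g : R -> R) a b K :
  a <= b -> 0 <= K ->
  (forall x y, a <= x <= b -> a <= y <= b -> Rabs (g x - g y) <= K * Rabs (x - y)) ->
  forall x, continuous (fun x => g (clamp a b x)) x.
Proof.
  intros Hab HK Hg. apply continuous_of_lipschitz with K. intros x y.
  eapply Rle_trans; [apply Hg; apply clamp_in; lra|].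
  apply Rmult_le_compat_l; [lra|]. now apply clamp_lipschitz.
Qed.

Lemma le_of_derive_nonpos (F dF : R -> R) a s :
  (forall x, is_derive F x (dF x)) -> (forall x, a <= x <= s -> dF x <= 0) ->
  a <= s -> F s <= F a.
Proof.
  intros HF HdF Has.
  destruct (MVT_gen F a s dF) as [xi [Hxi Hmvt]].
  - intros x _; apply HF.
  - intros x _; apply continuity_pt_filterlim.
    apply (ex_derive_continuous (K := R_AbsRing) (V := R_NormedModule) F x).
    eexists; apply HF.
  - rewrite Rmin_left, Rmax_right in Hxi by lra.
    pose proof (HdF xi Hxi). nra.
Qed.

Lemma gronwall_integral (D : R -> R) (L c a b : R) :
  0 < L -> (forall x, continuous D x) ->
  (forall x, a <= x <= b -> D x <= L * RInt D a x + c * (x - a)) ->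
  forall x, a <= x <= b -> D x <= c / L * (exp (L * (x - a)) - 1).
Proof.
  intros HL HD Hineq s Hs.
  set (I := fun x => RInt D a x).
  assert (HI : forall x, is_derive I x (D x)).
  { intro x. apply (is_derive_RInt D I a x); [|apply HD].
    apply filter_forall; intro y.
    exact (RInt_correct D a y (ex_RInt_continuous D a y (fun z _ => HD z))). }
  set (Psi := fun x => exp (- L * (x - a)) * (I x + c * ((x - a) / L + 1 / (L * L)))).
  assert (HPsi : forall x, is_derive Psi x (exp (- L * (x - a)) * (D x - L * I x - c * (x - a)))).
  { intro x. unfold Psi. auto_derive.
    - exists (D x). apply HI.
    - replace (Derive (fun y => I y) x) with (D x)
        by (symmetry; apply is_derive_unique, HI).
      unfold Rminus. field. lra. }
  assert (HPsi_le : Psi s <= Psi a).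
  { apply (le_of_derive_nonpos Psi _ a s HPsi); [|lra].
    intros x Hx. pose proof (exp_pos (- L * (x - a))) as Hpos.
    pose proof (Hineq x ltac:(lra)) as Hx'. change (RInt D a x) with (I x) in Hx'.
    apply Rmult_le_0_l; lra. }
  assert (HPsi_a : Psi a = c / (L * L)).
  { unfold Psi, I. rewrite RInt_point, Rminus_diag, Rmult_0_r, exp_0.
    unfold zero; simpl. field. lra. }
  assert (Hexp : exp (- L * (s - a)) * exp (L * (s - a)) = 1).
  { rewrite <- exp_plus. replace (- L * (s - a) + L * (s - a)) with 0 by ring. apply exp_0. }
  assert (HK : I s + c * ((s - a) / L + 1 / (L * L)) <= exp (L * (s - a)) * (c / (L * L))).
  { rewrite <- HPsi_a.
    replace (I s + c * ((s - a) / L + 1 / (L * L))) with (exp (L * (s - a)) * Psi s)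
      by (unfold Psi; rewrite <- Rmult_assoc, (Rmult_comm (exp _)), Hexp; ring).
    apply Rmult_le_compat_l; [apply Rlt_le, exp_pos | exact HPsi_le]. }
  apply (Rmult_le_compat_l L) in HK; [|lra].
  pose proof (Hineq s Hs) as Hs'. change (RInt D a s) with (I s) in Hs'.
  replace (L * (I s + c * ((s - a) / L + 1 / (L * L))))
    with (L * I s + c * (s - a) + c / L) in HK by (field; lra).
  replace (L * (exp (L * (s - a)) * (c / (L * L))))
    with (c / L * (exp (L * (s - a)) - 1) + c / L) in HK by (field; lra).
  lra.
Qed.

Section Solutions.

Variables (G : R -> vec2 -> vec2) (e : R -> vec2) (a b : R).
Hypothesis He : is_solution G e a b.

Lemma is_solution_increment s1 s2 :
  a <= s1 <= b -> a <= s2 <= b ->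
  is_RInt (fun x => fst (G x (e x))) s1 s2 (fst (vsub (e s2) (e s1))) /\
  is_RInt (fun x => snd (G x (e x))) s1 s2 (snd (vsub (e s2) (e s1))).
Proof.
  intros H1 H2.
  assert (Hchasles : forall (g : R -> R) p q r,
             is_RInt g a s1 (q - p) -> is_RInt g a s2 (r - p) -> is_RInt g s1 s2 (r - q)).
  { intros g p q r Hq Hr.
    replace (r - q) with (plus (opp (q - p)) (r - p))
      by (unfold plus, opp; simpl; ring).
    exact (is_RInt_Chasles _ _ _ _ _ _ (is_RInt_swap _ _ _ _ Hq) Hr). }
  destruct (He s1 H1) as [A1 A2], (He s2 H2) as [C1 C2].
  split; simpl; eapply Hchasles; eassumption.
Qed.

Lemma is_solution_lipschitz B :
  (forall s, a <= s <= b -> norm2 (G s (e s)) <= B) ->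
  forall x y, a <= x <= b -> a <= y <= b ->
  norm2 (vsub (e x) (e y)) <= B * Rabs (x - y).
Proof.
  intros HB.
  assert (Hle : forall x y, a <= y -> y <= x -> x <= b ->
            norm2 (vsub (e x) (e y)) <= B * (x - y)).
  { intros x y Hy Hyx Hx.
    destruct (is_solution_increment y x) as [I1 I2]; try lra.
    assert (Hc : is_RInt (fun _ => B) y x (B * (x - y))).
    { replace (B * (x - y)) with (scal (x - y) B)
        by (unfold scal; simpl; unfold mult; simpl; ring).
      exact (is_RInt_const y x B). }
    apply (norm2_is_RInt_le _ _ y x _ _ Hyx I1 I2 Hc).
    intros z Hz; apply HB; lra. }
  intros x y Hx Hy. destruct (Rle_dec y x).
  - rewrite Rabs_right by lra. apply Hle; lra.
  - rewrite norm2_vsubC, Rabs_left by lra.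
    replace (- (x - y)) with (y - x) by ring. apply Hle; lra.
Qed.

End Solutions.

Section TwoSolutions.

Variables (G1 G2 : R -> vec2 -> vec2) (e h : R -> vec2) (a b : R).
Hypotheses (He : is_solution G1 e a b) (Hh : is_solution G2 h a b) (Hinit : h a = e a).

Lemma solutions_gap_le_drift B :
  (forall s, a <= s <= b -> norm2 (G1 s (e s)) <= B) ->
  (forall s, a <= s <= b -> norm2 (G2 s (h s)) <= B) ->
  forall s, a <= s <= b -> norm2 (vsub (e s) (h s)) <= 2 * norm2 (e a) + 2 * (s - a) * B.
Proof.
  intros HBe HBh s Hs.
  assert (Ha : a <= a <= b) by lra.
  pose proof (is_solution_lipschitz _ _ _ _ He B HBe s a Hs Ha).
  pose proof (is_solution_lipschitz _ _ _ _ Hh B HBh s a Hs Ha).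
  pose proof (norm2_vsub_triangle (e s) (e a) (0, 0)).
  pose proof (norm2_vsub_triangle (h s) (h a) (0, 0)).
  pose proof (norm2_vsub_le (e s) (h s)).
  rewrite Hinit, !norm2_vsub0 in *. rewrite Rabs_right in * by lra. lra.
Qed.

Lemma solutions_gap_integral_le (beta : R -> R) s Ib :
  a <= s <= b -> is_RInt beta a s Ib ->
  (forall y, a < y < s -> norm2 (vsub (G1 y (e y)) (G2 y (h y))) <= beta y) ->
  norm2 (vsub (e s) (h s)) <= Ib.
Proof.
  intros Hs Hbeta Hgap.
  destruct (He s Hs) as [E1 E2], (Hh s Hs) as [H1 H2].
  rewrite Hinit in H1, H2.
  apply (norm2_is_RInt_le (fun y => vsub (G1 y (e y)) (G2 y (h y))) beta a s Ib);
    try tauto.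
  - replace (fst (vsub (e s) (h s))) with (minus (fst (e s) - fst (e a)) (fst (h s) - fst (e a)))
      by (unfold minus, plus, opp; simpl; ring).
    exact (is_RInt_minus _ _ _ _ _ _ E1 H1).
  - replace (snd (vsub (e s) (h s))) with (minus (snd (e s) - snd (e a)) (snd (h s) - snd (e a)))
      by (unfold minus, plus, opp; simpl; ring).
    exact (is_RInt_minus _ _ _ _ _ _ E2 H2).
Qed.

Lemma solutions_gap_le_gronwall B L c :
  0 < L -> a <= b ->
  (forall s, a <= s <= b -> norm2 (G1 s (e s)) <= B) ->
  (forall s, a <= s <= b -> norm2 (G2 s (h s)) <= B) ->
  (forall y, a <= y <= b ->
     norm2 (vsub (G1 y (e y)) (G2 y (h y))) <= L * norm2 (vsub (e y) (h y)) + c) ->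
  forall s, a <= s <= b -> norm2 (vsub (e s) (h s)) <= c / L * (exp (L * (s - a)) - 1).
Proof.
  intros HL Hab HBe HBh Hgap.
  (* Clamping extends the gap continuously to all of R, as [gronwall_integral] needs. *)
  set (gap := fun x => norm2 (vsub (e (clamp a b x)) (h (clamp a b x)))).
  assert (Hgap_id : forall x, a <= x <= b -> gap x = norm2 (vsub (e x) (h x)))
    by (intros; unfold gap; now rewrite clamp_id).
  assert (Hgap_cont : forall x, continuous gap x).
  { assert (HB : 0 <= B).
    { pose proof (HBe a ltac:(lra)). pose proof (norm2_ge0 (G1 a (e a))). lra. }
    apply (continuous_clamp_of_lipschitz_on (fun x => norm2 (vsub (e x) (h x))) a b (2 * B));
      [lra | lra |].
    intros x y Hx Hy. eapply Rle_trans; [apply norm2_vsub_lipschitz|].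
    pose proof (is_solution_lipschitz _ _ _ _ He B HBe x y Hx Hy).
    pose proof (is_solution_lipschitz _ _ _ _ Hh B HBh x y Hx Hy). lra. }
  intros s Hs. rewrite <- Hgap_id by exact Hs.
  apply (gronwall_integral gap L c a b HL Hgap_cont); [|exact Hs].
  intros x Hx. rewrite Hgap_id by exact Hx.
  apply (solutions_gap_integral_le (fun y => L * gap y + c) x);
    [exact Hx | |].
  - replace (L * RInt gap a x + c * (x - a))
      with (plus (scal L (RInt gap a x)) (scal (x - a) c))
      by (unfold plus, scal; simpl; unfold mult; simpl; ring).
    apply (is_RInt_plus (fun y => scal L (gap y)) (fun _ => c)).
    + exact (is_RInt_scal _ _ _ L _
               (RInt_correct gap a x (ex_RInt_continuous gap a x (fun z _ => Hgap_cont z)))).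
    + exact (is_RInt_const a x c).
  - intros y Hy. rewrite Hgap_id by lra. apply Hgap; lra.
Qed.

End TwoSolutions.

Lemma sum_map_le_const (g : nat -> R) K l :
  (forall j, In j l -> g j <= K) -> fold_right Rplus 0 (map g l) <= INR (length l) * K.
Proof.
  induction l as [|j l IH]; intros Hg; cbn [length map fold_right]; [simpl; lra|].
  rewrite S_INR. pose proof (Hg j (or_introl eq_refl)).
  pose proof (IH (fun i Hi => Hg i (or_intror Hi))). lra.
Qed.

Lemma sumN_le_const N (g : nat -> R) K :
  (forall j, (j < N)%nat -> g j <= K) -> sumN N g <= INR N * K.
Proof.
  intros Hg. unfold sumN. rewrite <- (length_seq N 0) at 2.
  apply sum_map_le_const. intros j Hj. apply in_seq in Hj. apply Hg; lia.
Qed.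

Lemma stack_norm_le N xb K :
  0 <= K -> (forall j, (j < N)%nat -> norm2 (xb j) <= K) ->
  stack_norm N xb <= sqrt (INR N) * K.
Proof.
  intros HK Hxb. unfold stack_norm.
  rewrite <- (sqrt_square K HK), <- sqrt_mult_alt by apply pos_INR.
  apply sqrt_le_1_alt, sumN_le_const. intros j Hj.
  pose proof (Hxb j Hj). pose proof (norm2_ge0 (xb j)). nra.
Qed.

Lemma sqrt_INR_le n : sqrt (INR n) <= INR n.
Proof.
  destruct n as [|n]; [simpl; rewrite sqrt_0; lra|].
  assert (H1 : 1 <= INR (S n)) by (apply (le_INR 1); lia).
  rewrite <- (sqrt_square (INR (S n))) at 2 by lra.
  apply sqrt_le_1_alt. nra.
Qed.

Theorem lemma2
  (W : vec2 -> Prop) (N : nat)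
  (f : vec2 -> (nat -> vec2) -> vec2)
  (M L Lbar : R)
  (hL : 0 < L) (hLbar : 0 < Lbar)
  (hM : forall x xb, W x -> inWN W N xb -> norm2 (f x xb) <= M)
  (hLip : forall x y xb, W x -> W y -> inWN W N xb ->
            norm2 (vsub (f x xb) (f y xb)) <= L * norm2 (vsub x y))
  (hLipbar : forall x xb yb, W x -> inWN W N xb -> inWN W N yb ->
            norm2 (vsub (f x xb) (f x yb)) <= Lbar * stack_norm N (stack_sub xb yb))
  (xdes : vec2)
  (t T : R) (hT : 0 < T)
  (u : R -> vec2) (umax : R)
  (hu_pc : piecewise_continuous u t (t + T))
  (hu_bd : forall s, t <= s <= t + T -> norm2 (u s) <= umax)
  (Rcell : R) (hR : 0 < Rcell)
  (xb xbhat : R -> nat -> vec2)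
  (hxbW : forall s, t <= s <= t + T -> inWN W N (xb s))
  (hxbhatW : forall s, t <= s <= t + T -> inWN W N (xbhat s))
  (hpred : forall s j, t <= s <= t + T -> (j < N)%nat ->
            norm2 (vsub (xb s j) (xbhat s j)) <= 2 * sqrt 3 * Rcell)
  (e ehat : R -> vec2)
  (he : is_solution (fun s z => vadd (f (vadd z xdes) (xb s)) (u s)) e t (t + T))
  (hehat : is_solution (fun s z => vadd (f (vadd z xdes) (xbhat s)) (u s)) ehat t (t + T))
  (hinit : ehat t = e t)
  (heW : forall s, t <= s <= t + T -> W (vadd (e s) xdes))
  (hehatW : forall s, t <= s <= t + T -> W (vadd (ehat s) xdes)) :
  forall s, t <= s <= t + T ->
    norm2 (vsub (e s) (ehat s)) <=
      Rmin ((2 * sqrt 3 * Rcell * Lbar * INR N / L) * (exp (L * (s - t)) - 1))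
           (2 * norm2 (e t) + 2 * (s - t) * (M + umax)).
Proof.
  intros s Hs.
  assert (Hrhs : forall z xbs x, W (vadd z xdes) -> inWN W N xbs -> t <= x <= t + T ->
             norm2 (vadd (f (vadd z xdes) xbs) (u x)) <= M + umax).
  { intros z xbs x Hz Hxbs Hx. eapply Rle_trans; [apply norm2_vadd_le|].
    pose proof (hM _ _ Hz Hxbs). pose proof (hu_bd x Hx). lra. }
  assert (Hcell : 0 <= 2 * sqrt 3 * Rcell) by (pose proof (sqrt_pos 3); nra).
  assert (Hstack : forall y, t <= y <= t + T ->
             stack_norm N (stack_sub (xb y) (xbhat y)) <= INR N * (2 * sqrt 3 * Rcell)).
  { intros y Hy. eapply Rle_trans.
    - apply stack_norm_le; [exact Hcell|]. intros j Hj. now apply hpred.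
    - apply Rmult_le_compat_r; [exact Hcell | apply sqrt_INR_le]. }
  apply Rmin_glb.
  - apply (solutions_gap_le_gronwall _ _ e ehat t (t + T) he hehat hinit (M + umax) L _ hL);
      [lra | intros x Hx; auto | intros x Hx; auto | | exact Hs].
    intros y Hy. rewrite vsub_vadd2r.
    eapply Rle_trans;
      [apply (norm2_vsub_triangle _ (f (vadd (ehat y) xdes) (xb y)))|].
    apply Rplus_le_compat.
    + rewrite <- (vsub_vadd2r (e y) (ehat y) xdes). auto.
    + eapply Rle_trans; [apply hLipbar; auto|].
      replace (2 * sqrt 3 * Rcell * Lbar * INR N)
        with (Lbar * (INR N * (2 * sqrt 3 * Rcell))) by ring.
      apply Rmult_le_compat_l; [lra | auto].
  - apply (solutions_gap_le_drift _ _ e ehat t (t + T) he hehat hinit);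
      [intros x Hx; auto | intros x Hx; auto | exact Hs].
Qed.
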